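(* Let $L$ be a Lelek fan and let $C\subseteq L$ be a subcontinuum of $L$ that is a Cantor fan. Then $C$ is nowhere dense in $L$, i.e. $\mathrm{Int}_L(\mathrm{Cl}_L(C))=\emptyset$.
   Context: A continuum is a nonempty compact connected metric space. A dendroid is an arcwise connected, hereditarily unicoherent continuum. A point $x$ of a dendroid $X$ is a ramification point if $x$ is the top (the branch point) of some simple triod in $X$. A fan is a dendroid with at most one ramification point; this point, if it exists, is called the top of the fan. For a fan $X$, a point $x$ is an end point of $X$ if $x$ is an end point of every arc in $X$ containing $x$; $E(X)$ denotes the set of end points of $X$. A fan $X$ with top $v$ is smooth if for every $x\in X$ and every sequence $x_n\to x$ in $X$, the arcs from $v$ to $x_n$ converge (in the Hausdorff metric) to the arc from $v$ to $x$. A Lelek fan is a smooth fan $X$ with $\mathrm{Cl}(E(X))=X$. A Cantor fan is a continuum homeomorphic to $\bigcup_{c\in C}A_c\subseteq\mathbb R^2$, where $C\subseteq[0,1]$ is the Cantor middle-third set and $A_c$ is the straight segment from $(\tfrac12,0)$ to $(c,1)$. *)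

From HB Require Import structures.
From mathcomp Require Import all_boot all_order all_algebra.
From mathcomp Require Import all_classical all_reals all_analysis.
Set Implicit Arguments. Unset Strict Implicit. Unset Printing Implicit Defensive.
Import Order.TTheory GRing.Theory Num.Theory.
Import numFieldTopology.Exports.
Local Open Scope classical_set_scope.
Local Open Scope ring_scope.

Section Fans.
Context {R : realType}.

Definition homeomorphic_sets {U V : topologicalType} (A : set U) (B : set V) :=
  exists (f : U -> V) (g : V -> U),
    {within A, continuous f} /\ {within B, continuous g} /\
    (forall x, A x -> B (f x) /\ g (f x) = x) /\
    (forall y, B y -> A (g y) /\ f (g y) = y).

Context {T : metricType R}.

Definition continuum (X : set T) := X !=set0 /\ compact X /\ connected X.

Definition arc_between (A : set T) (a b : T) :=
  exists (f : R -> T) (g : T -> R),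
    {within `[0, 1]%classic, continuous f} /\ {within A, continuous g} /\
    (forall t, `[0, 1]%classic t -> A (f t) /\ g (f t) = t) /\
    (forall y, A y -> `[0, 1]%classic (g y) /\ f (g y) = y) /\
    f 0 = a /\ f 1 = b.

Definition is_arc (A : set T) := exists a b, arc_between A a b.

Definition arc_endpoint (A : set T) (x : T) := exists y, arc_between A x y.

Definition arcwise_connected (X : set T) :=
  forall x y, X x -> X y -> x <> y -> exists A, A `<=` X /\ arc_between A x y.

Definition hereditarily_unicoherent (X : set T) :=
  forall A B, A `<=` X -> B `<=` X -> continuum A -> continuum B ->
    connected (A `&` B).

Definition dendroid (X : set T) :=
  continuum X /\ arcwise_connected X /\ hereditarily_unicoherent X.

Definition ramification_point (X : set T) (v : T) :=
  exists (A1 A2 A3 : set T) (a1 a2 a3 : T),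
    [/\ A1 `<=` X, A2 `<=` X & A3 `<=` X] /\
    [/\ arc_between A1 v a1, arc_between A2 v a2 & arc_between A3 v a3] /\
    [/\ A1 `&` A2 = [set v], A1 `&` A3 = [set v] & A2 `&` A3 = [set v]].

Definition fan (X : set T) :=
  dendroid X /\
  (forall x y, ramification_point X x -> ramification_point X y -> x = y).

Definition end_points (X : set T) : set T :=
  [set x | X x /\ forall A, A `<=` X -> is_arc A -> A x -> arc_endpoint A x].

Definition segment (X : set T) (v x : T) (S : set T) :=
  S `<=` X /\ (if pselect (x = v) then S = [set v] else arc_between S v x).

Definition hausdorff_cvg (S : nat -> set T) (K : set T) :=
  forall e : R, 0 < e -> \forall n \near \oo,
    (forall y, S n y -> exists2 x, K x & ball x e y) /\
    (forall x, K x -> exists2 y, S n y & ball x e y).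

Definition smooth_fan (X : set T) (v : T) :=
  fan X /\ ramification_point X v /\
  forall (x : T) (u : nat -> T) (Su : nat -> set T) (Sx : set T),
    X x -> (forall n, X (u n)) -> u @ \oo --> x ->
    (forall n, segment X v (u n) (Su n)) -> segment X v x Sx ->
    hausdorff_cvg Su Sx.

Definition lelek_fan (X : set T) :=
  (exists v, smooth_fan X v) /\ closure (end_points X) = X.

End Fans.

Fixpoint cantor_approx {R : realType} (n : nat) : set R :=
  match n with
  | 0 => `[0, 1]%classic
  | m.+1 => ((fun x : R => x / 3) @` cantor_approx m) `|`
            ((fun x : R => (2 + x) / 3) @` cantor_approx m)
  end.

Definition cantor_middle_third {R : realType} : set R :=
  \bigcap_(n in [set: nat]) cantor_approx n.

(* The Cantor fan: union of segments from (1/2, 0) to (c, 1), c in C. *)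
Definition cantor_fan_model {R : realType} : set (R * R)%type :=
  [set p | exists c t : R, cantor_middle_third c /\ 0 <= t <= 1 /\
     p = ((1 - t) * 2^-1 + t * c, t)].

Definition cantor_fan {R : realType} {T : metricType R} (X : set T) :=
  homeomorphic_sets X (@cantor_fan_model R).

From HB Require Import structures.
From mathcomp Require Import all_boot all_order all_algebra.
From mathcomp Require Import all_classical all_reals all_analysis.
From mathcomp Require Import lra.
Import Order.TTheory GRing.Theory Num.Theory.
Import numFieldTopology.Exports.
Local Open Scope classical_set_scope.
Local Open Scope ring_scope.

(* Measure the height of a point of the Cantor fan C along its leg. If C had an
   interior point, perturbing its height would give an open set of points of C
   of height strictly between 0 and 1. End points of the Lelek fan are dense,
   so one of them, e, lies there. But e is then an inner point of the leg of C
   through it, whereas an end point of the fan is an end point of every arc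
   containing it: a homeomorphism of [0, 1] cannot send 0 to an inner point. *)

Lemma continuous_within_comp {U V W : topologicalType} {A : set U} {B : set V}
    {f : U -> V} {g : V -> W} :
  {within A, continuous f} -> {within B, continuous g} ->
  (forall x, A x -> B (f x)) -> {within A, continuous (g \o f)}.
Proof.
move=> /subspace_continuousP cf /subspace_continuousP cg AB.
apply/subspace_continuousP => x Ax P /(cg _ (AB _ Ax)); rewrite nbhs_simpl.
move=> /(cf _ Ax); rewrite nbhs_simpl /=.
by apply: filterS2 (withinT _ _) => // y Ay /(_ (AB _ Ay)).
Qed.

Lemma itvcc_sub_closure_itvoo {R : realType} {a b : R} :
  a < b -> `[a, b] `<=` closure `]a, b[.
Proof.
move=> ab t; rewrite /= in_itv /= => /andP[ta tb] P /nbhs_ballP[e e0 etP].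
pose l := Num.min 1 (e / (b - a)).
have l0 : 0 < l by rewrite lt_min ltr01 divr_gt0 // subr_gt0.
have l1 : l <= 1 by rewrite ge_min lexx.
have le : l * (b - a) <= e.
  by rewrite -ler_pdivlMr ?subr_gt0 // ge_min lexx orbT.
(* move from t towards the midpoint by a step shorter than e *)
pose s := t + l * ((a + b) / 2 - t).
exists s; split.
  by rewrite /= in_itv /=; apply/andP; split; rewrite /s; nra.
by apply: etP; rewrite /ball /= ltr_norml; apply/andP; split; rewrite /s; nra.
Qed.

Lemma continuous_inj_onto_itv_end {R : realType} (a b c d : R) (phi : R -> R) :
  {within `[a, b], continuous phi} -> {in `[a, b] &, injective phi} ->
  `[c, d] `<=` phi @` `[a, b] -> ~ c < phi a < d.
Proof.
move=> cphi injphi onto /andP[ca ad].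
have cd : c <= d by rewrite ltW // (lt_trans ca ad).
have [x xab phix] : (phi @` `[a, b]) c by apply: onto; rewrite /= in_itv /= lexx cd.
have [y yab phiy] : (phi @` `[a, b]) d by apply: onto; rewrite /= in_itv /= lexx cd.
have aab : a \in `[a, b].
  by move: xab; rewrite /= !in_itv /= lexx => /andP[ax xb]; rewrite (le_trans ax xb).
have phia_between : Num.min (phi x) (phi y) <= phi a <= Num.max (phi x) (phi y).
  by rewrite phix phiy ge_min le_max (ltW ca) (ltW ad) orbT.
have sub u v : u \in `[a, b] -> v \in `[a, b] -> `[u, v] `<=` `[a, b].
  move=> + + z /=; rewrite !in_itv /= => /andP[au _] /andP[_ vb] /andP[uz zv].
  by rewrite (le_trans au uz) (le_trans zv vb).
(* phi a is taken again between the preimages of c and d, forcing one of them to be a *)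
have key u v : u \in `[a, b] -> v \in `[a, b] -> u <= v ->
    Num.min (phi u) (phi v) <= phi a <= Num.max (phi u) (phi v) -> u = a.
  move=> uab vab uv /(IVT uv (continuous_subspaceW (sub u v uab vab) cphi)).
  move=> [w wuv phiw]; have wa := injphi _ _ (sub u v uab vab w wuv) aab phiw.
  apply/eqP; rewrite eq_le; move: uab wuv; rewrite !in_itv /= wa.
  by move=> /andP[-> _] /andP[-> _].
have [xy|yx] := leP x y.
- by move: ca; rewrite -(key x y) // phix ltxx.
- by move: ad; rewrite -(key y x) ?(ltW yx) 1?minC 1?maxC // phiy ltxx.
Qed.

Definition cantor_ray {R : realType} (c s : R) : R * R :=
  ((1 - s) * 2^-1 + s * c, s).

Lemma continuous_cantor_ray {R : realType} (c : R) : continuous (cantor_ray c).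
Proof.
move=> s; apply: (@cvg_pair _ _ _ (nbhs s) (nbhs _) (nbhs _)) => //.
apply: cvgD; apply: cvgM => //; [exact: cvgB (cvg_cst _) cvg_id | exact: cvg_cst..].
Qed.

Lemma cantor_ray_model {R : realType} {c s : R} :
  cantor_middle_third c -> `[0, 1]%classic s -> cantor_fan_model (cantor_ray c s).
Proof. by move=> Cc; rewrite /= in_itv /= => s01; exists c, s. Qed.

Section CantorFanInSpace.
Context {R : realType} {T : metricType R} {C : set T}.
Context {h : T -> R * R} {g : R * R -> T}.
Hypotheses (ch : {within C, continuous h}) (cg : {within cantor_fan_model, continuous g}).
Hypotheses (hC : forall x, C x -> cantor_fan_model (h x) /\ g (h x) = x).
Hypotheses (gC : forall y, cantor_fan_model y -> C (g y) /\ h (g y) = y).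

Let height (x : T) : R := (h x).2.

Lemma continuous_height : {within C, continuous height}.
Proof.
have snd_cont : continuous (fun z : R * R => z.2) by move=> z; exact: cvg_snd.
exact: (continuous_within_comp ch (continuous_subspaceT (A := setT) snd_cont) (fun _ _ => I)).
Qed.

Let leg (c : R) := g \o cantor_ray c.

Lemma leg_subset {c : R} : cantor_middle_third c -> leg c @` `[0, 1] `<=` C.
Proof. by move=> Cc _ [s s01 <-]; exact: (gC _ (cantor_ray_model Cc s01)).1. Qed.

Lemma height_leg {c s : R} :
  cantor_middle_third c -> `[0, 1]%classic s -> height (leg c s) = s.
Proof. by move=> Cc s01; rewrite /height /leg /= (gC _ (cantor_ray_model Cc s01)).2. Qed.

Lemma arc_between_leg c : cantor_middle_third c ->
  arc_between (leg c @` `[0, 1]) (leg c 0) (leg c 1).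
Proof.
move=> Cc; exists (leg c), height; split.
  apply: (continuous_within_comp (continuous_subspaceT _) cg).
    exact: continuous_cantor_ray.
  by move=> s; exact: cantor_ray_model.
split; first by apply: continuous_subspaceW continuous_height; exact: leg_subset.
split; first by move=> s s01; split; [exists s | rewrite height_leg].
by split=> // _ [s s01 <-]; rewrite height_leg.
Qed.

Lemma end_point_not_inner {X : set T} {e : T} :
  C `<=` X -> C e -> end_points X e -> ~ 0 < height e < 1.
Proof.
move=> CX Ce [_ endX].
have [[c [t [Cc [t01 he]]]] ghe] := hC _ Ce.
have legX : leg c @` `[0, 1] `<=` X := subset_trans (leg_subset Cc) CX.
have legK z : (leg c @` `[0, 1]) z -> leg c (height z) = z.
  by move=> [s s01 <-]; rewrite height_leg.
have arcA : is_arc (leg c @` `[0, 1]).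
  by exists (leg c 0), (leg c 1); exact: arc_between_leg.
have Ae : (leg c @` `[0, 1]) e.
  by exists t; [rewrite /= in_itv | rewrite /leg /= -ghe he].
have [_ [f [finv [cf [_ [fA [Af [f0 _]]]]]]]] := endX _ legX arcA Ae.
rewrite -f0; apply: (continuous_inj_onto_itv_end 0 1 0 1 (height \o f)).
- exact: continuous_within_comp cf (continuous_subspaceW (leg_subset Cc) continuous_height)
    (fun s s01 => (fA s s01).1).
- move=> r r' r01 r'01 /= eqh; rewrite -(fA r r01).2 -(fA r' r'01).2.
  by rewrite -(legK _ (fA r r01).1) eqh legK //; exact: (fA r' r'01).1.
- move=> r r01; have Ar : (leg c @` `[0, 1]) (leg c r) by exists r.
  by exists (finv (leg c r)); [exact: (Af _ Ar).1 | rewrite /= (Af _ Ar).2 height_leg].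
Qed.

Lemma interior_meets_inner {p : T} : C° p -> exists2 x, C° x & 0 < height x < 1.
Proof.
move=> Cp; have /hC[hp_model ghp] := interior_subset Cp.
have [c [t [Cc [t01 hp]]]] := hp_model.
have near_p : within cantor_fan_model (nbhs (h p)) (g @^-1` C°).
  apply: (@subspace_continuousP _ _ _ g).1 cg _ hp_model _ _.
  by rewrite ghp; exact: nbhs_interior.
have near_t : nbhs t [set s | cantor_fan_model (cantor_ray c s) -> C° (g (cantor_ray c s))].
  by rewrite hp in near_p; exact: continuous_cantor_ray c t _ near_p.
have t01' : `[0, 1]%classic t by rewrite /= in_itv.
have [s [s01 Cs]] := itvcc_sub_closure_itvoo ltr01 _ t01' _ near_t.
have s01' : `[0, 1]%classic s by move: s01; rewrite /= !in_itv /= => /andP[/ltW -> /ltW ->].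
exists (g (cantor_ray c s)); first exact/Cs/cantor_ray_model.
by rewrite /height (gC _ (cantor_ray_model Cc s01')).2; move: s01; rewrite /= in_itv.
Qed.

Lemma nbhs_inner {x : T} : C° x -> 0 < height x < 1 ->
  nbhs x [set y | C° y /\ 0 < height y < 1].
Proof.
move=> Cx x01.
have near_height : within C (nbhs x) (height @^-1` `]0, 1[).
  have := (@subspace_continuousP _ _ _ height).1 continuous_height x (interior_subset Cx).
  by apply; apply: near_in_itvoo; rewrite in_itv.
apply: filterS2 (nbhs_interior Cx) near_height => y Cy y01; split => //.
by move: (y01 (interior_subset Cy)); rewrite /= in_itv.
Qed.

End CantorFanInSpace.

Theorem mainTheorem2 (R : realType) (T : metricType R) (C : set T) :
  lelek_fan (setT : set T) -> continuum C -> cantor_fan C ->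
  interior (closure C) = set0.
Proof.
move=> [_ dense_end] [_ [cC _]] [h [g [ch [cg [hC gC]]]]].
have <- : C = closure C := (closure_id C).1 (compact_closed (@metric_hausdorff R T) cC).
apply/seteqP; split => // p /(interior_meets_inner cg hC gC) [x Cx x01].
have : closure (end_points [set: T]) x by rewrite dense_end.
move=> /(_ _ (nbhs_inner ch Cx x01)) [e [end_e [Ce e01]]].
exact: (end_point_not_inner ch cg hC gC (@subsetT _ C) (interior_subset Ce) end_e e01).
Qed.
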